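(* Let $\Sigma$, $V$ and $f: V\to\mathbb{Z}^3$ be as in the context, and let $A \subseteq V$ be a set of triangles. Then: (1) $A$ is edge-connected if and only if $f(A)$ is 6-connected; (2) $A$ is vertex-connected if and only if $f(A)$ is 26-connected.
   Context: $\Sigma$ denotes the regular tiling of the Euclidean plane by congruent equilateral triangles. The lines containing the edges of the tiling fall into three parallel classes, numbered $i=1,2,3$; within each class the lines are equally spaced. $V$ denotes the set of triangles of $\Sigma$. Consistent labeling: fix a base triangle $v_0$. For $i=1,2,3$ let $H_{i,0}$ be the line of class $i$ containing a side of $v_0$, and $H_{i,-1}$ the line of class $i$ through the vertex of $v_0$ opposite that side. Index all lines of class $i$ by integers $H_{i,k}$, $k\in\mathbb{Z}$, so that consecutive (adjacent) parallel lines have consecutive indices and indices increase in the direction from $H_{i,-1}$ to $H_{i,0}$. Coordinates and cubulation map: for a triangle $v \in V$ set $v_i := k$ if $v$ lies between $H_{i,k}$ and $H_{i,k-1}$; define $f: V \to \mathbb{Z}^3$, $f(v) = (v_1, v_2, v_3)$. A set $A$ of triangles is edge-connected if for any $u,v\in A$ there is a sequence $u=w_0,w_1,\dots,w_n=v$ of triangles in $A$ with $w_j$ and $w_{j+1}$ sharing a side for all $j$; it is vertex-connected if the same holds with ''sharing a side'' replaced by ''sharing a vertex''. A set $S\subseteq\mathbb{Z}^3$ is 6-connected (face-connected) if any two points of $S$ are joined by a sequence of points of $S$ in which consecutive points differ by $1$ in exactly one coordinate and agree in the others; it is 26-connected (vertex-connected) if any two points of $S$ are joined by a sequence of points of $S$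 in which consecutive points are distinct and differ by at most $1$ in each coordinate. *)

From Stdlib Require Import ZArith List.
Open Scope Z_scope.

(* Model of the triangular tiling Sigma, up to an affine change of coordinates
   (which preserves lines, parallelism, equal spacing, incidence).  Lattice
   points are Z x Z; the three parallel classes of lines are
   x = c (class 1), y = c (class 2), x + y = c (class 3), c in Z. *)
Definition pt := (Z * Z)%type.

Inductive tri : Type :=
| Up (a b : Z)
| Down (a b : Z).

Definition verts (v : tri) : list pt :=
  match v with
  | Up a b => (a, b) :: (a + 1, b) :: (a, b + 1) :: nil
  | Down a b => (a + 1, b) :: (a, b + 1) :: (a + 1, b + 1) :: nil
  end.

(* Two triangles of the tiling share a side iff they have two common vertices
   (the common side is the segment joining them). *)
Definition share_side (u w : tri) : Prop :=
  u <> w /\ exists p q : pt, p <> q /\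
    In p (verts u) /\ In q (verts u) /\ In p (verts w) /\ In q (verts w).

Definition share_vertex (u w : tri) : Prop :=
  u <> w /\ exists p : pt, In p (verts u) /\ In p (verts w).

Inductive cls : Type := C1 | C2 | C3.

(* Linear functional whose level sets are the lines of class i. *)
Definition lin (i : cls) (p : pt) : Z :=
  match i with
  | C1 => fst p
  | C2 => snd p
  | C3 => fst p + snd p
  end.

(* Consistent labeling with base triangle v0 = Up 0 0 = {(0,0),(1,0),(0,1)}:
   H_{1,0} : x = 0 (contains side (0,0)-(0,1)),  H_{1,-1} : x = 1 (through (1,0));
   H_{2,0} : y = 0,                               H_{2,-1} : y = 1;
   H_{3,0} : x + y = 1,                           H_{3,-1} : x + y = 0.
   Consecutive indices = adjacent lines, indices increasing from H_{i,-1} to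
   H_{i,0}.  hval i k is the level of line H_{i,k}: H_{i,k} = {p | lin i p = hval i k}. *)
Definition hval (i : cls) (k : Z) : Z :=
  match i with
  | C1 => - k
  | C2 => - k
  | C3 => k + 1
  end.

Definition lies_between (i : cls) (k : Z) (v : tri) : Prop :=
  forall p, In p (verts v) ->
    Z.min (hval i k) (hval i (k - 1)) <= lin i p <= Z.max (hval i k) (hval i (k - 1)).

Definition Z3 := (Z * Z * Z)%type.

Definition coord (i : cls) (x : Z3) : Z :=
  match x with
  | (x1, x2, x3) =>
    match i with C1 => x1 | C2 => x2 | C3 => x3 end
  end.

Definition adj6 (x y : Z3) : Prop :=
  match x, y with
  | (x1, x2, x3), (y1, y2, y3) =>
      (Z.abs (x1 - y1) = 1 /\ x2 = y2 /\ x3 = y3) \/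
      (x1 = y1 /\ Z.abs (x2 - y2) = 1 /\ x3 = y3) \/
      (x1 = y1 /\ x2 = y2 /\ Z.abs (x3 - y3) = 1)
  end.

Definition adj26 (x y : Z3) : Prop :=
  x <> y /\
  match x, y with
  | (x1, x2, x3), (y1, y2, y3) =>
      Z.abs (x1 - y1) <= 1 /\ Z.abs (x2 - y2) <= 1 /\ Z.abs (x3 - y3) <= 1
  end.

(* walk R S u l v : u = w_0, w_1, ..., w_n = v with l = [w_1; ...; w_n],
   all w_j (j >= 1) in S and R w_j w_{j+1}. *)
Fixpoint walk {X : Type} (R : X -> X -> Prop) (S : X -> Prop)
  (u : X) (l : list X) (v : X) : Prop :=
  match l with
  | nil => u = v
  | w :: l' => S w /\ R u w /\ walk R S w l' v
  end.

Definition connected {X : Type} (R : X -> X -> Prop) (S : X -> Prop) : Prop :=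
  forall u v, S u -> S v -> exists l, walk R S u l v.

Definition edge_connected (A : tri -> Prop) : Prop := connected share_side A.
Definition vertex_connected (A : tri -> Prop) : Prop := connected share_vertex A.

Definition image {X Y : Type} (f : X -> Y) (A : X -> Prop) : Y -> Prop :=
  fun y => exists x, A x /\ f x = y.

(* The hypothesis on f pins it down completely: each coordinate of f v is the
   index of the strip of lines containing v, so f is the explicit map [cube]
   (Up a b |-> (-a, -b, a+b), Down a b |-> (-a, -b, a+b+1)), which is injective
   and lands in the "cells" x with x1 + x2 + x3 in {0, 1}.  In these
   coordinates the vertices of a triangle are exactly the lattice points p with
   p1 + x1, p2 + x2, p1 + p2 - x3 all in {0, 1} ([in_cell]).  Hence two
   triangles share a vertex iff these three pairs of unit intervals meet
   compatibly, which happens iff the cells are 26-adjacent; and they share two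
   vertices iff exactly one coordinate differs (by 1), i.e. the cells are
   6-adjacent.  Finally, an injective map that preserves and reflects adjacency
   transports walks in both directions, so connectedness of A and of f(A)
   coincide. *)

From Stdlib Require Import ZArith List Lia.

Definition cube (v : tri) : Z3 :=
  match v with
  | Up a b => (- a, - b, a + b)
  | Down a b => (- a, - b, a + b + 1)
  end.

(* [in_cell x p]: the lattice point p lies in the closed triangle whose cube
   coordinates are x (it is between the two lines of each class bounding it). *)
Definition in_cell (x : Z3) (p : pt) : Prop :=
  let '(x1, x2, x3) := x in
  let '(p1, p2) := p in
  0 <= p1 + x1 <= 1 /\ 0 <= p2 + x2 <= 1 /\ 0 <= p1 + p2 - x3 <= 1.

Definition is_cell (x : Z3) : Prop :=
  let '(x1, x2, x3) := x in 0 <= x1 + x2 + x3 <= 1.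

Lemma cube_is_cell (v : tri) : is_cell (cube v).
Proof. destruct v; simpl; lia. Qed.

Lemma cube_injective (u w : tri) : cube u = cube w -> u = w.
Proof.
  destruct u as [a b | a b], w as [c d | c d]; simpl; intros E; injection E;
    intros; first [f_equal; lia | lia].
Qed.

Lemma verts_in_cell (v : tri) (p : pt) : In p (verts v) <-> in_cell (cube v) p.
Proof.
  destruct p as [p1 p2], v as [a b | a b]; simpl; split.
  all: intros H.
  1, 3: destruct H as [E | [E | [E | []]]]; injection E; lia.
  (* a lattice point of a cell is one of the four corners of a unit square,
     and the sum constraint excludes one of them *)
  all: assert (p1 = a \/ p1 = a + 1) as [-> | ->] by lia;
       assert (p2 = b \/ p2 = b + 1) as [-> | ->] by lia;
       intuition (f_equal; lia).
Qed.

Lemma interval_sum (a1 b1 a2 b2 a3 b3 : Z) :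
  a1 <= b1 -> a2 <= b2 -> a3 <= b3 -> a1 + a2 <= b3 -> a3 <= b1 + b2 ->
  exists p1 p2, a1 <= p1 <= b1 /\ a2 <= p2 <= b2 /\ a3 <= p1 + p2 <= b3.
Proof.
  intros. exists (Z.max a1 (a3 - b2)), (Z.max a2 (a3 - Z.max a1 (a3 - b2))). lia.
Qed.

Lemma common_point_iff (x y : Z3) : is_cell x -> is_cell y ->
  ((x <> y /\ exists p, in_cell x p /\ in_cell y p) <-> adj26 x y).
Proof.
  intros Hx Hy; unfold adj26; split; intros [Hne H]; split; try exact Hne;
    destruct x as [[x1 x2] x3], y as [[y1 y2] y3]; cbn [is_cell] in *.
  - destruct H as [[p1 p2] [Hp Hq]]; cbn [in_cell] in *; lia.
  - destruct (interval_sum (- Z.min x1 y1) (1 - Z.max x1 y1)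
                (- Z.min x2 y2) (1 - Z.max x2 y2)
                (Z.max x3 y3) (Z.min x3 y3 + 1)) as (p1 & p2 & ?); try lia.
    exists (p1, p2); cbn [in_cell]; lia.
Qed.

Lemma pt_neq_iff (p q : pt) : p <> q <-> fst p <> fst q \/ snd p <> snd q.
Proof.
  destruct p as [p1 p2], q as [q1 q2]; simpl; split.
  - intros H; destruct (Z.eq_dec p1 q1) as [-> | ?]; [right | left]; congruence.
  - intros [H | H] E; injection E; intros; contradiction.
Qed.

(* Two distinct cells share two lattice points iff they are 6-adjacent: a
   second differing coordinate would force the common point to be unique. *)
Lemma two_common_points_iff (x y : Z3) : is_cell x -> is_cell y ->
  ((x <> y /\ exists p q, p <> q /\
      in_cell x p /\ in_cell x q /\ in_cell y p /\ in_cell y q) <-> adj6 x y).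
Proof.
  destruct x as [[x1 x2] x3], y as [[y1 y2] y3]; cbn [is_cell adj6]; intros Hx Hy; split.
  - intros (Hne & [p1 p2] & [q1 q2] & Hpq%pt_neq_iff & ?); cbn [in_cell fst snd] in *.
    assert (x1 <> y1 \/ x2 <> y2 \/ x3 <> y3)
      by (destruct (Z.eq_dec x1 y1), (Z.eq_dec x2 y2), (Z.eq_dec x3 y3); subst; tauto).
    lia.
  - intros Hadj; split; [intros E; injection E; intros; lia |].
    destruct Hadj as [(? & <- & <-) | [(<- & ? & <-) | (<- & <- & ?)]].
    + exists (1 - Z.max x1 y1, x3 - 1 + Z.max x1 y1), (1 - Z.max x1 y1, x3 + Z.max x1 y1).
      split; [apply pt_neq_iff; cbn [fst snd]; lia | cbn [in_cell]; lia].
    + exists (x3 - 1 + Z.max x2 y2, 1 - Z.max x2 y2), (x3 + Z.max x2 y2, 1 - Z.max x2 y2).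
      split; [apply pt_neq_iff; cbn [fst snd]; lia | cbn [in_cell]; lia].
    + exists (1 - x1, - x2), (- x1, 1 - x2).
      split; [apply pt_neq_iff; cbn [fst snd]; lia | cbn [in_cell]; lia].
Qed.

Lemma cube_neq_iff (u w : tri) : u <> w <-> cube u <> cube w.
Proof.
  split; intros Hne E; apply Hne; [apply cube_injective, E | rewrite E; reflexivity].
Qed.

Lemma share_vertex_adj26 (u w : tri) : share_vertex u w <-> adj26 (cube u) (cube w).
Proof.
  rewrite <- (common_point_iff _ _ (cube_is_cell u) (cube_is_cell w)).
  unfold share_vertex; rewrite cube_neq_iff.
  setoid_rewrite verts_in_cell; reflexivity.
Qed.

Lemma share_side_adj6 (u w : tri) : share_side u w <-> adj6 (cube u) (cube w).
Proof.
  rewrite <- (two_common_points_iff _ _ (cube_is_cell u) (cube_is_cell w)).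
  unfold share_side; rewrite cube_neq_iff.
  setoid_rewrite verts_in_cell; reflexivity.
Qed.

Lemma walk_image {X Y : Type} (R : X -> X -> Prop) (R' : Y -> Y -> Prop) (g : X -> Y)
  (S : X -> Prop) (HR : forall x y, R x y -> R' (g x) (g y)) :
  forall l u v, walk R S u l v -> walk R' (image g S) (g u) (map g l) (g v).
Proof.
  induction l as [| w l IH]; simpl; intros u v Hwalk.
  - congruence.
  - destruct Hwalk as (Hw & Huw & Hrest).
    split; [exists w; split; auto |].
    split; [apply HR, Huw | apply IH, Hrest].
Qed.

Lemma walk_preimage {X Y : Type} (R : X -> X -> Prop) (R' : Y -> Y -> Prop) (g : X -> Y)
  (S : X -> Prop) (Hinj : forall x y, g x = g y -> x = y)
  (HR : forall x y, R' (g x) (g y) -> R x y) :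
  forall l u v, walk R' (image g S) (g u) l (g v) -> exists l', walk R S u l' v.
Proof.
  induction l as [| y l IH]; simpl; intros u v Hwalk.
  - exists nil; simpl; apply Hinj, Hwalk.
  - destruct Hwalk as ((x & Hx & <-) & Hux & Hrest).
    destruct (IH x v Hrest) as (l' & Hl').
    exists (x :: l'); simpl; auto.
Qed.

Lemma connected_image_iff {X Y : Type} (R : X -> X -> Prop) (R' : Y -> Y -> Prop)
  (g : X -> Y) (S : X -> Prop) (Hinj : forall x y, g x = g y -> x = y)
  (HR : forall x y, R x y <-> R' (g x) (g y)) :
  connected R S <-> connected R' (image g S).
Proof.
  split.
  - intros Hconn y1 y2 (u & Hu & <-) (v & Hv & <-).
    destruct (Hconn u v Hu Hv) as (l & Hl).
    exists (map g l); apply (walk_image R); [intros x y; apply HR | exact Hl].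
  - intros Hconn u v Hu Hv.
    destruct (Hconn (g u) (g v) (ex_intro _ u (conj Hu eq_refl))
                                (ex_intro _ v (conj Hv eq_refl))) as (l & Hl).
    apply (walk_preimage R R' g S Hinj (fun x y => proj2 (HR x y)) l), Hl.
Qed.

Lemma lies_between_coord (i : cls) (k : Z) (v : tri) :
  lies_between i k v -> k = coord i (cube v).
Proof.
  unfold lies_between; intros H.
  destruct v as [a b | a b];
  (* the three vertices of v realize both boundary levels of the strip *)
  pose proof (H _ (or_introl eq_refl));
  pose proof (H _ (or_intror (or_introl eq_refl)));
  pose proof (H _ (or_intror (or_intror (or_introl eq_refl))));
  destruct i; simpl in *; lia.
Qed.

Lemma Z3_ext (x y : Z3) : (forall i, coord i x = coord i y) -> x = y.
Proof.
  destruct x as [[x1 x2] x3], y as [[y1 y2] y3]; intros H.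
  pose proof (H C1); pose proof (H C2); pose proof (H C3); simpl in *; congruence.
Qed.

Lemma cubulation_is_cube (f : tri -> Z3)
  (Hf : forall (v : tri) (i : cls), lies_between i (coord i (f v)) v) :
  forall v, f v = cube v.
Proof. intros v; apply Z3_ext; intros i; apply lies_between_coord, Hf. Qed.

Theorem mainTheorem3 (f : tri -> Z3)
  (Hf : forall (v : tri) (i : cls), lies_between i (coord i (f v)) v)
  (A : tri -> Prop) :
  (edge_connected A <-> connected adj6 (image f A)) /\
  (vertex_connected A <-> connected adj26 (image f A)).
Proof.
  pose proof (cubulation_is_cube f Hf) as Hcube.
  assert (Hinj : forall u w, f u = f w -> u = w)
    by (intros u w; rewrite !Hcube; apply cube_injective).
  split; apply connected_image_iff; try exact Hinj; intros u w; rewrite !Hcube.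
  - apply share_side_adj6.
  - apply share_vertex_adj26.
Qed.
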